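(* Let $U=\begin{pmatrix} a & b\\ c & d\end{pmatrix}$ be a $2\times 2$ unitary matrix with $abcd\neq 0$, let $\varphi={}^t[\alpha,\beta]\in\mathbf{C}^2$ with $|\alpha|^2+|\beta|^2=1$, and let $X_n^{\varphi}$ be the position at time $n$ of the one-dimensional quantum random walk determined by $U$ started from $\varphi$ (defined in the context). Let $n\ge 1$ and $m\ge 1$ be integers, and write $\Re_\varphi = a\alpha\overline{b\beta}+\overline{a\alpha}b\beta$ and, for $1\le k$, $1\le \gamma,\delta\le k$, $$C_{k,\gamma,\delta}=\left(-\frac{|b|^2}{|a|^2}\right)^{\gamma+\delta}\binom{k-1}{\gamma-1}\binom{k-1}{\delta-1}\binom{n-k-1}{\gamma-1}\binom{n-k-1}{\delta-1}.$$ (i) If $m$ is odd, then $$E\big((X_n^{\varphi})^m\big)=|a|^{2(n-1)}\Big[-n^m\big\{(|a|^2-|b|^2)(|\alpha|^2-|\beta|^2)+2\Re_\varphi\big\}\Big]+\sum_{k=1}^{\lfloor (n-1)/2\rfloor}\sum_{\gamma=1}^{k}\sum_{\delta=1}^{k}C_{k,\gamma,\delta}\,\frac{(n-2k)^{m+1}}{\gamma\delta}\Big[-\{n(|a|^2-|b|^2)+\gamma+\delta\}(|\alpha|^2-|\beta|^2)+\Big(\frac{\gamma+\delta}{|b|^2}-2n\Big)\Re_\varphi\Big].$$ (ii) If $m$ is even, then $$E\big((X_n^{\varphi})^m\big)=|a|^{2(n-1)}\Big[n^m+\sum_{k=1}^{\lfloor (n-1)/2\rfloor}\sum_{\gamma=1}^{k}\sum_{\delta=1}^{k}C_{k,\gamma,\delta}\,\frac{(n-2k)^{m}}{\gamma\delta}\Big\{(n-k)^2+k^2-n(\gamma+\delta)+\frac{2\gamma\delta}{|b|^2}\Big\}\Big].$$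 In particular, for even $m$, $E((X_n^{\varphi})^m)$ does not depend on $\varphi$.
   Context: Quantum random walk on $\mathbf{Z}$ determined by a $2\times2$ unitary matrix $U=\begin{pmatrix} a & b\\ c & d\end{pmatrix}$: set $P=\begin{pmatrix} a & b\\ 0&0\end{pmatrix}$, $Q=\begin{pmatrix} 0&0\\ c & d\end{pmatrix}$ (so $U=P+Q$). Given an initial qubit state $\varphi={}^t[\alpha,\beta]\in\mathbf{C}^2$ with $|\alpha|^2+|\beta|^2=1$, define amplitudes $\Psi_k(n)\in\mathbf{C}^2$ ($k\in\mathbf{Z}$, $n\ge0$) by $\Psi_0(0)=\varphi$, $\Psi_k(0)=0$ for $k\neq0$, and $\Psi_k(n+1)=P\Psi_{k+1}(n)+Q\Psi_{k-1}(n)$. The random variable $X_n^{\varphi}$ takes value $k$ with probability $P(X_n^{\varphi}=k)=\|\Psi_k(n)\|^2$ (Euclidean norm squared); unitarity of $U$ makes this a probability distribution. $\lfloor x\rfloor$ is the integer part, $\overline{z}$ the complex conjugate. *)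

(* Complex numbers are  R[i] = complex R  for a real closed
   field R (e.g. the real numbers); the statement is purely algebraic. *)
From HB Require Import structures.
From mathcomp Require Import all_boot all_order all_algebra.
From mathcomp Require Import complex.
Set Implicit Arguments. Unset Strict Implicit. Unset Printing Implicit Defensive.
Import Order.TTheory GRing.Theory Num.Theory.
Local Open Scope ring_scope.

Section QW.
Variable R : rcfType.
Local Notation C := (R[i]).

Definition unitary (U : 'M[C]_2) : Prop :=
  U *m (map_mx Num.conj U)^T = 1%:M.

Definition Pmat (U : 'M[C]_2) : 'M[C]_2 :=
  \matrix_(i < 2, j < 2) if i == 0 then U i j else 0.
Definition Qmat (U : 'M[C]_2) : 'M[C]_2 :=
  \matrix_(i < 2, j < 2) if i == 1 then U i j else 0.

Fixpoint Psi (U : 'M[C]_2) (phi : 'cV[C]_2) (n : nat) : int -> 'cV[C]_2 :=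
  match n with
  | 0 => fun k => if k == 0 then phi else 0
  | n'.+1 => fun k => Pmat U *m Psi U phi n' (k + 1) + Qmat U *m Psi U phi n' (k - 1)
  end.

Definition prob (U : 'M[C]_2) (phi : 'cV[C]_2) (n : nat) (k : int) : C :=
  \sum_(i < 2) `|Psi U phi n k i 0| ^+ 2.

(* sum of k^m P(X_n = k) over the window -N <= k <= N *)
Definition moment_window (U : 'M[C]_2) (phi : 'cV[C]_2) (n m N : nat) : C :=
  \sum_(j < (N + N).+1) (((j%:Z - N%:Z)%:~R : C) ^+ m) * prob U phi n (j%:Z - N%:Z).

Definition qubit (alpha beta : C) : 'cV[C]_2 :=
  \col_(i < 2) if i == 0 then alpha else beta.

Definition Ccoef (a b : C) (n k g d : nat) : C :=
  (- (`|b| ^+ 2 / `|a| ^+ 2)) ^+ (g + d) *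
  ('C(k.-1, g.-1) * 'C(k.-1, d.-1) * 'C(n - k - 1, g.-1) * 'C(n - k - 1, d.-1))%:R.

Definition Rephi (a b alpha beta : C) : C :=
  a * alpha * (b * beta)^* + (a * alpha)^* * b * beta.

Definition odd_moment (a b alpha beta : C) (n m : nat) : C :=
  let A := `|a| ^+ 2 in let B := `|b| ^+ 2 in
  let D := `|alpha| ^+ 2 - `|beta| ^+ 2 in let Re := Rephi a b alpha beta in
  A ^+ n.-1 *
  ( - (n%:R ^+ m) * ((A - B) * D + 2 * Re)
    + \sum_(1 <= k < ((n - 1)./2).+1) \sum_(1 <= g < k.+1) \sum_(1 <= d < k.+1)
        Ccoef a b n k g d * ((n - 2 * k)%:R ^+ m.+1 / (g * d)%:R) *
        ( - (n%:R * (A - B) + (g + d)%:R) * D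
          + ((g + d)%:R / B - 2 * n%:R) * Re)).

Definition even_moment (a b : C) (n m : nat) : C :=
  let A := `|a| ^+ 2 in let B := `|b| ^+ 2 in
  A ^+ n.-1 *
  ( n%:R ^+ m
    + \sum_(1 <= k < ((n - 1)./2).+1) \sum_(1 <= g < k.+1) \sum_(1 <= d < k.+1)
        Ccoef a b n k g d * ((n - 2 * k)%:R ^+ m / (g * d)%:R) *
        ((n - k)%:R ^+ 2 + k%:R ^+ 2 - n%:R * (g + d)%:R + 2 * (g * d)%:R / B)).

End QW.

From HB Require Import structures.
From mathcomp Require Import all_boot all_order all_algebra.
From mathcomp Require Import complex.
From mathcomp Require Import ring zify.
Set Implicit Arguments. Unset Strict Implicit. Unset Printing Implicit Defensive.
Import Order.TTheory GRing.Theory Num.Theory.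
Local Open Scope ring_scope.

(* A path with l steps to the left and r steps to the right, ending at r - l,
   contributes a product of entries of U that only depends on where it turns.
   Counting paths by their number of turns gives the amplitude Psi_(r-l)(l+r)
   as a^(l-1) d^r (resp. a^l d^(r-1)) times sums of binomial products in
   rho = bc/(ad) = -|b|^2/|a|^2; this closed form is checked directly against
   the recursion defining Psi.  Hence P(X_n = r - l) is |a|^(2(n-1)) times a
   double sum over (gamma, delta) of the coefficients C_(k,gamma,delta) against
   a sesquilinear expression in the entries of U and phi.  Pairing the
   positions +-(n - 2k), symmetrising in (gamma, delta) and using unitarity
   (d = det U a^*, c = - det U b^*, |det U| = 1) collapses that expression to
   the bracket of the statement; the extreme positions +-n give the leading
   term, and positions of the wrong parity carry no mass. *)

Section PathSums.
Variable F : fieldType.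
Variables a b c d u v : F.
Hypotheses (a0 : a != 0) (b0 : b != 0) (c0 : c != 0) (d0 : d != 0).

Definition walk_ratio := b * c / (a * d).

Definition binsum i j K l r :=
  \sum_(g < K) walk_ratio ^+ g.+1 * ('C(l.-1, i + g) * 'C(r.-1, j + g))%:R.

Lemma binsum_swap i j K l r : binsum i j K l r = binsum j i K r l.
Proof. by apply: eq_bigr => g _; rewrite mulnC. Qed.

Lemma binsumSl i j K l r :
  binsum i.+1 j K l.+2 r = binsum i.+1 j K l.+1 r + binsum i j K l.+1 r.
Proof.
rewrite /binsum -big_split; apply: eq_bigr => g _ /=.
by rewrite addSn binS mulnDl natrD mulrDr.
Qed.

Lemma binsumSr i j K l r :
  binsum i j.+1 K l r.+2 = binsum i j.+1 K l r.+1 + binsum i j K l r.+1.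
Proof. by rewrite !(binsum_swap i) binsumSl. Qed.

(* Pascal's rule on the first binomial, followed by a shift of the summation
   index; the term pushed out of range vanishes because r <= K. *)
Lemma binsum_shiftl K l r : (r <= K)%N ->
  binsum 0 0 K l.+2 r = binsum 0 0 K l.+1 r + walk_ratio * binsum 0 1 K l.+1 r.
Proof.
case: K => [|K] hr; first by rewrite /binsum !big_ord0 mulr0 addr0.
rewrite /binsum big_ord_recl [in RHS]big_ord_recl.
rewrite [X in _ = _ + walk_ratio * X]big_ord_recr /= !add0n.
rewrite (bin_small (n := r.-1) (m := 1 + K)) ?muln0 ?mulr0 ?addr0; last by case: r hr.
rewrite !bin0 /bump /= mulr_sumr -addrA -big_split /=; congr (_ + _).
apply: eq_bigr => g _ /=.
by rewrite !add0n add1n binS mulnDl natrD mulrDr [in X in _ = _ + X]mulrA -exprS addrC.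
Qed.

Lemma binsum_shiftr K l r : (l <= K)%N ->
  binsum 0 0 K l r.+2 = binsum 0 0 K l r.+1 + walk_ratio * binsum 1 0 K l r.+1.
Proof. by move=> hl; rewrite !(binsum_swap _ _ K l) binsum_shiftl. Qed.

Lemma binsum_1l K r : binsum 1 0 K 1 r = 0.
Proof. by rewrite /binsum big1 // => g _; rewrite bin_small // mul0n mulr0. Qed.

Lemma binsum_1r K l : binsum 0 1 K l 1 = 0.
Proof. by rewrite binsum_swap binsum_1l. Qed.

Lemma binsum00_1l K r : binsum 0 0 K.+1 1 r = walk_ratio.
Proof.
rewrite /binsum big_ord_recl big1 /= ?bin0 ?mulr1 ?addr0 // => g _.
by rewrite bin_small // mul0n mulr0.
Qed.

Lemma binsum00_1r K l : binsum 0 0 K.+1 l 1 = walk_ratio.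
Proof. by rewrite binsum_swap binsum00_1l. Qed.

Definition ampL K l r :=
  a ^+ l.-1 * d ^+ r * (u * binsum 1 0 K l r + a / c * v * binsum 0 0 K l r).
Definition ampR K l r :=
  a ^+ l * d ^+ r.-1 * (v * binsum 0 1 K l r + d / b * u * binsum 0 0 K l r).

Lemma ampL_rec K l r : (0 < l)%N -> (0 < r)%N -> (r <= K)%N ->
  ampL K l.+1 r = a * ampL K l r + b * ampR K l r.
Proof.
case: l => // l _; case: r => // r _ hr.
rewrite /ampL /ampR binsumSl binsum_shiftl //= !exprS /walk_ratio.
by field; rewrite a0 b0 c0 d0.
Qed.

Lemma ampR_rec K l r : (0 < l)%N -> (0 < r)%N -> (l <= K)%N ->
  ampR K l r.+1 = c * ampL K l r + d * ampR K l r.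
Proof.
case: l => // l _; case: r => // r _ hl.
rewrite /ampL /ampR binsumSr binsum_shiftr //= !exprS /walk_ratio.
by field; rewrite a0 b0 c0 d0.
Qed.

Lemma ampL_1l K r : ampL K.+1 1 r.+1 = b * (d ^+ r * v).
Proof.
rewrite /ampL binsum_1l binsum00_1l /= exprS /walk_ratio.
by field; rewrite a0 c0 d0.
Qed.

Lemma ampR_1r K l : ampR K.+1 l.+1 1 = c * (a ^+ l * u).
Proof.
rewrite /ampR binsum_1r binsum00_1r /= exprS /walk_ratio.
by field; rewrite a0 b0 d0.
Qed.

End PathSums.

(* Primed letters stand for the complex conjugates of the entries of a unitary
   matrix and of the initial qubit, taken as independent unknowns subject to
   the unitarity relations (Dl = det U); this keeps [field] away from
   conjugation. *)
Section UnitaryIdentities.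
Variable F : fieldType.
Variables (a a' b b' c c' d d' al al' be be' Dl : F).
Hypotheses (a0 : a != 0) (b0 : b != 0) (b'0 : b' != 0) (Dl0 : Dl != 0).
Hypotheses (ha' : a' = (1 - b * b') / a) (hc : c = - Dl * b') (hd : d = Dl * a')
  (hc' : c' = - b / Dl) (hd' : d' = a / Dl).

Local Notation u := (a * al + b * be).
Local Notation v := (c * al + d * be).
Local Notation u' := (a' * al' + b' * be').
Local Notation v' := (c' * al' + d' * be').

Definition pair_form (l r g h : F) :=
  (u * ((l - g) / g) + a / c * v) * (u' * ((l - h) / h) + a' / c' * v')
  + (v * ((r - g) / g) + d / b * u) * (v' * ((r - h) / h) + d' / b' * u').

Lemma pair_form_even l r g h : g != 0 -> h != 0 -> al * al' + be * be' = 1 ->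
  (pair_form l r g h + pair_form r l g h) + (pair_form l r h g + pair_form r l h g) =
  2 * ((r ^+ 2 + l ^+ 2 - (l + r) * (g + h) + 2 * (g * h) / (b * b')) / (g * h)).
Proof.
move=> g0 h0 hnorm; rewrite -[X in _ = X]mulr1 -[X in _ = _ * X]hnorm.
rewrite /pair_form hc hd hc' hd' ha'.
by field; rewrite ?oppr_eq0 b'0 b0 h0 g0 a0 Dl0.
Qed.

Lemma pair_form_odd l r g h : g != 0 -> h != 0 ->
  (pair_form l r g h - pair_form r l g h) + (pair_form l r h g - pair_form r l h g) =
  2 * ((r - l) * (- ((l + r) * (a * a' - b * b') + (g + h)) * (al * al' - be * be')
         + ((g + h) / (b * b') - 2 * (l + r)) * (a * al * (b' * be') + a' * al' * (b * be)))
       / (g * h)).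
Proof.
move=> g0 h0; rewrite /pair_form hc hd hc' hd' ha'.
by field; rewrite ?oppr_eq0 b'0 b0 h0 g0 a0 Dl0.
Qed.

Lemma extremes_even : al * al' + be * be' = 1 -> u * u' + v * v' = 1.
Proof.
move=> hnorm; rewrite -[RHS]hnorm hc hd hc' hd' ha'.
by field; rewrite a0 Dl0.
Qed.

Lemma extremes_odd : v * v' - u * u' =
  - ((a * a' - b * b') * (al * al' - be * be')
     + 2 * (a * al * (b' * be') + a' * al' * (b * be))).
Proof. by rewrite hc hd hc' hd' ha'; field; rewrite a0 Dl0. Qed.

End UnitaryIdentities.

Section Sums.
Variable V : nmodType.

Lemma sum_ord2 (G : 'I_2 -> V) : \sum_(i < 2) G i = G 0 + G 1.
Proof. by rewrite !big_ord_recl big_ord0 addr0; congr (_ + G _); exact: val_inj. Qed.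

Lemma sum_window (G : int -> V) N :
  \sum_(j < (N + N).+1) G (j%:Z - N%:Z) = G 0 + \sum_(x < N) (G x.+1%:Z + G (- x.+1%:Z)).
Proof.
elim: N => [|N IH]; first by rewrite big_ord_recl !big_ord0 /= addr0.
rewrite addSn addnS big_ord_recl big_ord_recr /= [in RHS]big_ord_recr /=.
rewrite (eq_bigr (fun j : 'I_(N + N).+1 => G (j%:Z - N%:Z))); last first.
  by move=> j _; congr G; rewrite /bump /=; lia.
rewrite IH (_ : 0%:Z - N.+1%:Z = - N.+1%:Z); last by lia.
rewrite (_ : (bump 0 (N + N).+1)%:Z - N.+1%:Z = N.+1%:Z); last by rewrite /bump /=; lia.
by rewrite addrC -!addrA.
Qed.

Lemma sum_ord_truncate n k (hk : (k <= n)%N) (G : 'I_n -> V) :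
  (forall g : 'I_n, (k <= g)%N -> G g = 0) ->
  \sum_(g < n) G g = \sum_(g < k) G (widen_ord hk g).
Proof.
move=> hG; rewrite -(big_ord_narrow hk) [RHS]big_mkcond; apply: eq_bigr => g _.
by case: ifP => // /negbT; rewrite -leqNgt => /hG ->.
Qed.

Lemma sum_parity n (G : nat -> V) : (0 < n)%N -> (forall x, odd (n + x) -> G x = 0) ->
  \sum_(x < n) G x.+1 = \sum_(k < ((n - 1)./2).+1) G (n - 2 * k)%N.
Proof.
case: n => [//|n] _; rewrite subn1 /=; move: n.
suff IH : forall M n, (n <= M)%N -> (forall x, odd (n.+1 + x) -> G x = 0) ->
  \sum_(x < n.+1) G x.+1 = \sum_(k < (n./2).+1) G (n.+1 - 2 * k)%N.
  by move=> n; apply: IH.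
elim=> [|M IH] n hn hG.
  by move: hn; rewrite leqn0 => /eqP ->; rewrite !big_ord_recl !big_ord0.
case: n hn hG => [|[|n]] hn hG.
- by rewrite !big_ord_recl !big_ord0.
- by rewrite !big_ord_recr !big_ord0 /= hG ?add0r.
rewrite 2![in LHS]big_ord_recr /= (hG n.+2) ?addr0; last by rewrite oddD /=; case: (odd n).
rewrite IH; [|lia|]; last first.
  by move=> x hx; apply: hG; rewrite (_ : (n.+3 + x = (n.+1 + x).+2)%N) //= negbK.
rewrite [RHS]big_ord_recl /= muln0 subn0 addrC; congr (_ + _).
by apply: eq_bigr => k _; congr G; rewrite /bump /=; lia.
Qed.

End Sums.

Lemma mul_conj_weighted_sum (K : numClosedFieldType) k (w f : 'I_k -> K) (x : K) :
  (forall g, (w g)^* = w g) ->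
  (x * \sum_g w g * f g) * (x * \sum_g w g * f g)^* =
  x * x^* * \sum_g \sum_h w g * w h * (f g * (f h)^*).
Proof.
move=> hw; rewrite rmorphM rmorph_sum /=.
have -> : \sum_g (w g * f g)^* = \sum_g w g * (f g)^*.
  by apply: eq_bigr => g _; rewrite rmorphM /= hw.
rewrite mulrACA big_distrlr /=; congr (_ * _).
by apply: eq_bigr => g _; apply: eq_bigr => h _; ring.
Qed.

Lemma sum_symmetrize (K : numFieldType) k (f t : 'I_k -> 'I_k -> K) :
  (forall g h, f g h + f h g = 2 * t g h) -> \sum_g \sum_h f g h = \sum_g \sum_h t g h.
Proof.
move=> hf; have two0 : (2 : K) != 0 by rewrite pnatr_eq0.
apply: (mulfI two0).
rewrite mulr_natl mulr2n [X in _ + X]exchange_big -big_split /= mulr_sumr.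
by apply: eq_bigr => g _; rewrite -big_split mulr_sumr; apply: eq_bigr => h _; exact: hf.
Qed.

Section Walk.
Variable R : rcfType.
Local Notation C := R[i].
Variable U : 'M[C]_2.
Variables (al be : C).
Local Notation a := (U 0 0).
Local Notation b := (U 0 1).
Local Notation c := (U 1 0).
Local Notation d := (U 1 1).
Local Notation phi := (qubit al be).
Local Notation u := (a * al + b * be).
Local Notation v := (c * al + d * be).
Local Notation Ps := (Psi U phi).

Lemma ord2_cases (i : 'I_2) : i = 0 \/ i = 1.
Proof. by case: i => [[|[|m]]] h; [left|right|] => //; exact: val_inj. Qed.

Lemma qubit_0 (x y : C) : qubit x y 0 0 = x. Proof. by rewrite mxE. Qed.
Lemma qubit_1 (x y : C) : qubit x y 1 0 = y. Proof. by rewrite mxE. Qed.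

Lemma qubit_eta (w : 'cV[C]_2) : w = qubit (w 0 0) (w 1 0).
Proof. by apply/matrixP => i j; rewrite !mxE (ord1 j); case: (ord2_cases i) => ->. Qed.

Lemma qubitD (x y x' y' : C) : qubit x y + qubit x' y' = qubit (x + x') (y + y').
Proof. by apply/matrixP => i j; rewrite !mxE; case: (i == 0). Qed.

Lemma Pmat_qubit (x y : C) : Pmat U *m qubit x y = qubit (a * x + b * y) 0.
Proof.
apply/matrixP => i j; rewrite !mxE sum_ord2 !mxE /=.
by case: (ord2_cases i) => -> /=; rewrite ?mul0r ?addr0.
Qed.

Lemma Qmat_qubit (x y : C) : Qmat U *m qubit x y = qubit 0 (c * x + d * y).
Proof.
apply/matrixP => i j; rewrite !mxE sum_ord2 !mxE /=.
by case: (ord2_cases i) => -> /=; rewrite ?mul0r ?addr0.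
Qed.

Lemma PsiS n k : Ps n.+1 k = Pmat U *m Ps n (k + 1) + Qmat U *m Ps n (k - 1).
Proof. by []. Qed.

Lemma Psi_eq0 n k : (forall l r : nat, (l + r)%N = n -> k <> r%:Z - l%:Z) -> Ps n k = 0.
Proof.
elim: n k => [|n IH] k hk /=.
  by case: eqP => // k0; case: (hk 0%N 0%N) => //; rewrite k0.
rewrite !IH ?mulmx0 ?addr0 // => l r hlr hkl.
- by apply: (hk l r.+1); lia.
- by apply: (hk l.+1 r); lia.
Qed.

Lemma Psi_rightmost n : Ps n.+1 n.+1 = qubit 0 (d ^+ n * v).
Proof.
elim: n => [|n IH].
  rewrite PsiS (@Psi_eq0 0 (1 + 1)); last by move=> l r h; lia.
  rewrite mulmx0 add0r subrr /= Qmat_qubit.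
  by congr qubit; rewrite ?mulr0 ?add0r ?mul1r.
rewrite PsiS (@Psi_eq0 n.+1); last by move=> l r h; lia.
rewrite mulmx0 add0r (_ : n.+2%:Z - 1 = n.+1); last by lia.
by rewrite IH Qmat_qubit mulr0 add0r exprS mulrA.
Qed.

Lemma Psi_leftmost n : Ps n.+1 (- n.+1%:Z) = qubit (a ^+ n * u) 0.
Proof.
elim: n => [|n IH].
  rewrite PsiS (@Psi_eq0 0 (-1 - 1)); last by move=> l r h; lia.
  rewrite mulmx0 addr0 (_ : -1 + 1 = 0 :> int) //= Pmat_qubit.
  by congr qubit; rewrite ?mulr0 ?add0r ?mul1r.
rewrite PsiS [Ps n.+1 (_ - 1)](@Psi_eq0 n.+1); last by move=> l r h; lia.
rewrite mulmx0 addr0 (_ : - n.+2%:Z + 1 = - n.+1%:Z); last by lia.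
by rewrite IH Pmat_qubit mulr0 addr0 exprS mulrA.
Qed.

Hypotheses (a0 : a != 0) (b0 : b != 0) (c0 : c != 0) (d0 : d != 0).

Lemma Psi_interior K n : (n <= K)%N ->
  forall l r : nat, (l + r)%N = n -> (0 < l)%N -> (0 < r)%N ->
  Ps n (r%:Z - l%:Z) = qubit (ampL a b c d u v K l r) (ampR a b c d u v K l r).
Proof.
elim: n => [|n IH] hK l r hn hl hr; first by lia.
have hL : a * Ps n (r%:Z - l%:Z + 1) 0 0 + b * Ps n (r%:Z - l%:Z + 1) 1 0
          = ampL a b c d u v K l r.
  case: l hl hn => [//|[|l]] _ hn.
    case: r hr hn => [//|r] _ hn; case: K hK IH => [|K] hK IH; first by lia.
    have -> : r.+1%:Z - 1%:Z + 1 = r.+1 by lia.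
    have -> : n = r.+1 by lia.
    by rewrite Psi_rightmost qubit_0 qubit_1 mulr0 add0r ampL_1l.
  have -> : r%:Z - l.+2%:Z + 1 = r%:Z - l.+1%:Z by lia.
  by rewrite IH ?qubit_0 ?qubit_1 ?[RHS]ampL_rec //; lia.
have hR : c * Ps n (r%:Z - l%:Z - 1) 0 0 + d * Ps n (r%:Z - l%:Z - 1) 1 0
          = ampR a b c d u v K l r.
  case: r hr hn {hL} => [//|[|r]] _ hn.
    case: l hl hn => [//|l] _ hn; case: K hK IH => [|K] hK IH; first by lia.
    have -> : 1%:Z - l.+1%:Z - 1 = - l.+1%:Z by lia.
    have -> : n = l.+1 by lia.
    by rewrite Psi_leftmost qubit_0 qubit_1 mulr0 addr0 ampR_1r.
  have -> : r.+2%:Z - l%:Z - 1 = r.+1%:Z - l%:Z by lia.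
  by rewrite IH ?qubit_0 ?qubit_1 ?[RHS]ampR_rec //; lia.
rewrite PsiS [Ps n (_ + 1)]qubit_eta [Ps n (_ - 1)]qubit_eta Pmat_qubit Qmat_qubit qubitD.
by rewrite addr0 add0r hL hR.
Qed.

Hypothesis hU : unitary U.

Lemma unitary_rows (i j : 'I_2) : U i 0 * (U j 0)^* + U i 1 * (U j 1)^* = (i == j)%:R.
Proof. by have := congr1 (fun M : 'M[C]_2 => M i j) hU; rewrite /= !mxE sum_ord2 !mxE. Qed.

(* Dl is det U: unitarity gives d = Dl a^*, c = - Dl b^* and |Dl| = 1.  It is
   locked so that rewriting with morphism lemmas does not unfold it. *)
Definition Dl : C := locked (d / a^*).
Lemma DlE : Dl = d / a^*. Proof. by rewrite /Dl -lock. Qed.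

Lemma conja_neq0 : a^* != 0. Proof. by rewrite conjC_eq0. Qed.
Lemma conjb_neq0 : b^* != 0. Proof. by rewrite conjC_eq0. Qed.
Lemma Dl_neq0 : Dl != 0. Proof. by rewrite DlE mulf_neq0 // invr_eq0 conja_neq0. Qed.

Lemma d_Dl : d = Dl * a^*.
Proof. by rewrite DlE mulrC mulrCA divff ?mulr1 // conja_neq0. Qed.

Lemma c_Dl : c = - Dl * b^*.
Proof.
have h := unitary_rows 1 0; rewrite /= mulr0n in h.
have e : c * a^* = - (d * b^*) by apply/eqP; rewrite -addr_eq0 h.
by apply: (mulIf conja_neq0); rewrite e d_Dl; ring.
Qed.

Lemma normU_row0 : a * a^* + b * b^* = 1.
Proof. by have := unitary_rows 0 0; rewrite eqxx. Qed.

Lemma conj_Dl : Dl^* = Dl^-1.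
Proof.
have h : c * c^* + d * d^* = 1 by have := unitary_rows 1 1; rewrite eqxx.
have e : Dl * Dl^* = 1.
  by rewrite -h c_Dl d_Dl !rmorphM rmorphN /= !conjCK -[Dl * Dl^*]mulr1 -normU_row0; ring.
by rewrite -[LHS]mul1r -(mulVf Dl_neq0) -mulrA e mulr1.
Qed.

Lemma conja_Dl : a^* = (1 - b * b^*) / a.
Proof. by rewrite -normU_row0 addrK mulrC mulKf. Qed.
Lemma conjc_Dl : c^* = - b / Dl.
Proof. by rewrite c_Dl rmorphM rmorphN /= conjCK conj_Dl mulNr mulNr mulrC. Qed.
Lemma conjd_Dl : d^* = a / Dl.
Proof. by rewrite d_Dl rmorphM /= conjCK conj_Dl mulrC. Qed.

Lemma normU_d : d * d^* = a * a^*.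
Proof. by rewrite conjd_Dl d_Dl; field; rewrite Dl_neq0. Qed.

Lemma walk_ratioE : walk_ratio a b c d = - (`|b| ^+ 2 / `|a| ^+ 2).
Proof.
by rewrite /walk_ratio !normCK c_Dl d_Dl; field; rewrite a0 Dl_neq0 conja_neq0.
Qed.

Definition weight l r g : C :=
  (- (`|b| ^+ 2 / `|a| ^+ 2)) ^+ g.+1 * ('C(l.-1, g) * 'C(r.-1, g))%:R.
Definition factorL l g : C := u * ((l.-1 - g)%:R / g.+1%:R) + a / c * v.
Definition factorR r g : C := v * ((r.-1 - g)%:R / g.+1%:R) + d / b * u.

Lemma conj_weight l r g : (weight l r g)^* = weight l r g.
Proof.
by rewrite /weight rmorphM !rmorphXn rmorphN fmorph_div !rmorphXn /= !conj_normC conjC_nat.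
Qed.

Lemma weight_sym l r g : weight l r g = weight r l g.
Proof. by rewrite /weight mulnC. Qed.

Lemma natr_binS n g : 'C(n, g.+1)%:R = 'C(n, g)%:R * ((n - g)%:R / g.+1%:R) :> C.
Proof.
have g0 : g.+1%:R != 0 :> C by rewrite pnatr_eq0.
by rewrite -[LHS](mulKf g0) -natrM mul_bin_left natrM; ring.
Qed.

Lemma ampL_weights K l r :
  u * binsum a b c d 1 0 K l r + a / c * v * binsum a b c d 0 0 K l r
  = \sum_(g < K) weight l r g * factorL l g.
Proof.
rewrite /binsum walk_ratioE mulr_sumr [X in _ + X]mulr_sumr -big_split.
by apply: eq_bigr => g _ /=; rewrite /weight /factorL add0n add1n !natrM natr_binS; ring.
Qed.

Lemma ampR_weights K l r :
  v * binsum a b c d 0 1 K l r + d / b * u * binsum a b c d 0 0 K l r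
  = \sum_(g < K) weight l r g * factorR r g.
Proof.
rewrite /binsum walk_ratioE mulr_sumr [X in _ + X]mulr_sumr -big_split.
by apply: eq_bigr => g _ /=; rewrite /weight /factorR add0n add1n !natrM natr_binS; ring.
Qed.

Lemma norm_pow_ad k j : (a ^+ k * d ^+ j) * (a ^+ k * d ^+ j)^* = (`|a| ^+ 2) ^+ (k + j).
Proof. by rewrite rmorphM !rmorphXn /= mulrACA -!exprMn normU_d exprD normCK. Qed.

Lemma prob_interior l r : (0 < l)%N -> (0 < r)%N ->
  prob U phi (l + r) (r%:Z - l%:Z) = (`|a| ^+ 2) ^+ (l + r).-1 *
  \sum_(g < l + r) \sum_(h < l + r) weight l r g * weight l r h *
    (factorL l g * (factorL l h)^* + factorR r g * (factorR r h)^*).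
Proof.
move=> hl hr; rewrite /prob sum_ord2 (Psi_interior (K := (l + r)%N) (leqnn _)) //.
rewrite qubit_0 qubit_1 /ampL /ampR ampL_weights ampR_weights !normCK.
rewrite !mul_conj_weighted_sum; try by move=> g; rewrite conj_weight.
rewrite !norm_pow_ad (_ : (l.-1 + r = (l + r).-1)%N); last by lia.
rewrite (_ : (l + r.-1 = (l + r).-1)%N); last by lia.
rewrite -mulrDr -big_split /=; congr (_ * _); first by rewrite normCK.
by apply: eq_bigr => g _; rewrite -big_split /=; apply: eq_bigr => h _; ring.
Qed.

Local Notation PF := (pair_form a a^* b b^* c c^* d d^* al al^* be be^*).

Lemma factor_pair_form l r g h : (g < l)%N -> (h < l)%N -> (g < r)%N -> (h < r)%N ->
  factorL l g * (factorL l h)^* + factorR r g * (factorR r h)^*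
  = PF l%:R r%:R g.+1%:R h.+1%:R.
Proof.
have natB1 k j : (j < k)%N -> (k.-1 - j)%:R = k%:R - j.+1%:R :> C.
  by move=> hjk; rewrite -natrB; [congr (_%:R); lia | lia].
move=> hgl hhl hgr hhr; rewrite /factorL /factorR !natB1 //.
by rewrite !(rmorphD, rmorphN, rmorphM, rmorphB, fmorphV) /= !conjC_nat.
Qed.

Lemma weight_eq0 l r g : (0 < l)%N -> (0 < r)%N -> (l <= g)%N || (r <= g)%N ->
  weight l r g = 0.
Proof.
move=> hl hr /orP[hg|hg]; rewrite /weight.
  by rewrite (bin_small (n := l.-1)) ?mul0n ?mulr0 //; lia.
by rewrite (bin_small (n := r.-1) (m := g)) ?muln0 ?mulr0 //; lia.
Qed.

(* k = min(l, r): the weights vanish beyond it. *)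
Lemma prob_interior_min l r k : (0 < l)%N -> (0 < r)%N -> (k <= l)%N -> (k <= r)%N ->
  (k == l) || (k == r) ->
  prob U phi (l + r) (r%:Z - l%:Z) = (`|a| ^+ 2) ^+ (l + r).-1 *
  \sum_(g < k) \sum_(h < k) weight l r g * weight l r h * PF l%:R r%:R g.+1%:R h.+1%:R.
Proof.
move=> hl hr hkl hkr hk; rewrite prob_interior //; congr (_ * _).
have hkn : (k <= l + r)%N by lia.
have w0 (g : nat) : (k <= g)%N -> weight l r g = 0.
  by move=> hg; apply: weight_eq0 => //; case/orP: hk => /eqP <-; rewrite hg ?orbT.
rewrite (sum_ord_truncate hkn) => [|g hg]; last by rewrite big1 // => h _; rewrite w0 ?mul0r.
apply: eq_bigr => g _ /=.
rewrite (sum_ord_truncate hkn) => [|h hh]; last by rewrite (w0 h) // mulr0 mul0r.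
apply: eq_bigr => h _ /=; have := ltn_ord g; have := ltn_ord h => ? ?.
by rewrite factor_pair_form //; lia.
Qed.

Lemma prob_opposite n k : (0 < k)%N -> (k.*2 < n)%N ->
  prob U phi n (n - 2 * k)%N = (`|a| ^+ 2) ^+ n.-1 * \sum_(g < k) \sum_(h < k)
    weight k (n - k) g * weight k (n - k) h * PF k%:R (n - k)%:R g.+1%:R h.+1%:R /\
  prob U phi n (- (n - 2 * k)%N%:Z) = (`|a| ^+ 2) ^+ n.-1 * \sum_(g < k) \sum_(h < k)
    weight k (n - k) g * weight k (n - k) h * PF (n - k)%:R k%:R g.+1%:R h.+1%:R.
Proof.
move=> hk hkn.
have e1 : (n - 2 * k)%N%:Z = (n - k)%N%:Z - k%:Z by lia.
have e2 : - (n - 2 * k)%N%:Z = k%:Z - (n - k)%N%:Z by lia.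
have P1 := @prob_interior_min k (n - k) k.
have P2 := @prob_interior_min (n - k) k k.
rewrite (_ : (k + (n - k))%N = n) in P1; last by lia.
rewrite (_ : (n - k + k)%N = n) in P2; last by lia.
rewrite e2 e1 P1 ?P2 ?eqxx ?orbT //; try lia.
split=> //; congr (_ * _).
by apply: eq_bigr => g _; apply: eq_bigr => h _; rewrite !(weight_sym (n - k)).
Qed.

Lemma prob_pair_add n k : (0 < k)%N -> (k.*2 < n)%N ->
  `|al| ^+ 2 + `|be| ^+ 2 = 1 ->
  prob U phi n (n - 2 * k)%N + prob U phi n (- (n - 2 * k)%N%:Z) =
  (`|a| ^+ 2) ^+ n.-1 * \sum_(g < k) \sum_(h < k) weight k (n - k) g * weight k (n - k) h *
   (((n - k)%:R ^+ 2 + k%:R ^+ 2 - (k%:R + (n - k)%:R) * (g.+1%:R + h.+1%:R)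
     + 2 * (g.+1%:R * h.+1%:R) / (b * b^*)) / (g.+1%:R * h.+1%:R)).
Proof.
move=> hk hkn hnorm; have [-> ->] := prob_opposite hk hkn.
rewrite -mulrDr -big_split /=; congr (_ * _).
under eq_bigr do rewrite -big_split /=.
apply: sum_symmetrize => g h; rewrite -!mulrDr (mulrC (weight _ _ h)) -mulrDr.
rewrite (pair_form_even a0 b0 conjb_neq0 Dl_neq0 conja_Dl c_Dl d_Dl conjc_Dl conjd_Dl)
  ?pnatr_eq0 -?normCK //.
by rewrite mulrCA.
Qed.

Lemma prob_pair_sub n k : (0 < k)%N -> (k.*2 < n)%N ->
  prob U phi n (n - 2 * k)%N - prob U phi n (- (n - 2 * k)%N%:Z) =
  (`|a| ^+ 2) ^+ n.-1 * \sum_(g < k) \sum_(h < k) weight k (n - k) g * weight k (n - k) h *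
   (((n - k)%:R - k%:R) * (- ((k%:R + (n - k)%:R) * (a * a^* - b * b^*) + (g.+1%:R + h.+1%:R))
        * (al * al^* - be * be^*)
      + ((g.+1%:R + h.+1%:R) / (b * b^*) - 2 * (k%:R + (n - k)%:R))
        * (a * al * (b^* * be^*) + a^* * al^* * (b * be))) / (g.+1%:R * h.+1%:R)).
Proof.
move=> hk hkn; have [-> ->] := prob_opposite hk hkn.
rewrite -mulrBr -sumrB /=; congr (_ * _).
under eq_bigr do rewrite -sumrB /=.
apply: sum_symmetrize => g h; rewrite -!mulrBr (mulrC (weight _ _ h)) -mulrDr.
rewrite (pair_form_odd al al^* be be^* a0 b0 conjb_neq0 Dl_neq0 conja_Dl c_Dl d_Dl
  conjc_Dl conjd_Dl) ?pnatr_eq0 //.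
by rewrite mulrCA.
Qed.

Lemma prob_rightmost n : prob U phi n.+1 n.+1 = (`|a| ^+ 2) ^+ n * (v * v^*).
Proof.
rewrite /prob sum_ord2 Psi_rightmost qubit_0 qubit_1 normr0 expr0n /= add0r normCK.
by rewrite rmorphM rmorphXn /= mulrACA -exprMn normU_d normCK.
Qed.

Lemma prob_leftmost n : prob U phi n.+1 (- n.+1%:Z) = (`|a| ^+ 2) ^+ n * (u * u^*).
Proof.
rewrite /prob sum_ord2 Psi_leftmost qubit_0 qubit_1 normr0 expr0n /= addr0 normCK.
by rewrite rmorphM rmorphXn /= mulrACA -exprMn normCK.
Qed.

Lemma prob_extremes_add n : `|al| ^+ 2 + `|be| ^+ 2 = 1 ->
  prob U phi n.+1 n.+1 + prob U phi n.+1 (- n.+1%:Z) = (`|a| ^+ 2) ^+ n.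
Proof.
move=> hnorm; rewrite prob_rightmost prob_leftmost -mulrDr addrC !(rmorphD, rmorphM) /=.
by rewrite (extremes_even a0 Dl_neq0 conja_Dl c_Dl d_Dl conjc_Dl conjd_Dl) -?normCK ?mulr1.
Qed.

Lemma prob_extremes_sub n :
  prob U phi n.+1 n.+1 - prob U phi n.+1 (- n.+1%:Z) = (`|a| ^+ 2) ^+ n *
  - ((a * a^* - b * b^*) * (al * al^* - be * be^*)
     + 2 * (a * al * (b^* * be^*) + a^* * al^* * (b * be))).
Proof.
rewrite prob_rightmost prob_leftmost -mulrBr !(rmorphD, rmorphM) /=.
by rewrite (extremes_odd al al^* be be^* a0 Dl_neq0 conja_Dl c_Dl d_Dl conjc_Dl conjd_Dl).
Qed.

Definition moment_pair m n (y : nat) : C :=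
  y%:R ^+ m * prob U phi n y + (- y%:R) ^+ m * prob U phi n (- y%:Z).

Lemma moment_pairE m n y : moment_pair m n y =
  y%:R ^+ m * (prob U phi n y + (-1) ^+ odd m * prob U phi n (- y%:Z)).
Proof. by rewrite /moment_pair exprNn signr_odd; ring. Qed.

(* Positions outside [-n, n] and of the wrong parity carry no mass, and 0 has
   weight 0^m = 0. *)
Lemma moment_window_pairs m n N : (0 < m)%N -> (0 < n)%N -> (n <= N)%N ->
  moment_window U phi n m N = \sum_(k < ((n - 1)./2).+1) moment_pair m n (n - 2 * k)%N.
Proof.
move=> hm hn hnN.
rewrite /moment_window (sum_window (fun x : int => x%:~R ^+ m * prob U phi n x)).
rewrite expr0n eqn0Ngt hm mul0r add0r.
have prob0 k : Ps n k = 0 -> prob U phi n k = 0.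
  by move=> Hk; rewrite /prob Hk big1 // => i _; rewrite mxE normr0 expr0n.
rewrite (eq_bigr (fun x : 'I_N => moment_pair m n x.+1)); last first.
  by move=> x _; rewrite /moment_pair mulrNz.
rewrite (sum_ord_truncate hnN) => [|x hx]; last first.
  by rewrite /moment_pair !prob0 ?mulr0 ?addr0 //; apply: Psi_eq0 => l r hlr; lia.
apply: sum_parity => // x hx.
have [->|_] := eqVneq x 0%N.
  by rewrite /moment_pair oppr0 expr0n eqn0Ngt hm !mul0r addr0.
rewrite /moment_pair !prob0 ?mulr0 ?addr0 //; apply: Psi_eq0 => l r hlr he.
- have e : (n + x = r + r)%N by lia.
  by move: hx; rewrite e addnn odd_double.
- have e : (n + x = l + l)%N by lia.
  by move: hx; rewrite e addnn odd_double.
Qed.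

Lemma CcoefE n k g h :
  Ccoef a b n k g.+1 h.+1 = weight k (n - k) g * weight k (n - k) h.
Proof. by rewrite /Ccoef /weight /= exprD -!subn1 !natrM; ring. Qed.

Lemma moment_pair_even m n k : ~~ odd m -> (0 < k)%N -> (k.*2 < n)%N ->
  `|al| ^+ 2 + `|be| ^+ 2 = 1 ->
  moment_pair m n (n - 2 * k)%N = (`|a| ^+ 2) ^+ n.-1 *
  \sum_(1 <= g < k.+1) \sum_(1 <= h < k.+1)
    Ccoef a b n k g h * ((n - 2 * k)%:R ^+ m / (g * h)%:R) *
    ((n - k)%:R ^+ 2 + k%:R ^+ 2 - n%:R * (g + h)%:R + 2 * (g * h)%:R / `|b| ^+ 2).
Proof.
move=> hmo hk hkn hnorm; rewrite moment_pairE (negbTE hmo) mul1r prob_pair_add //.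
rewrite big_add1 /= big_mkord.
under [in RHS]eq_bigr do rewrite big_add1 /= big_mkord.
rewrite mulrCA; congr (_ * _); rewrite mulr_sumr; apply: eq_bigr => g _.
rewrite mulr_sumr; apply: eq_bigr => h _; rewrite CcoefE.
have en : n%:R = k%:R + (n - k)%:R :> C by rewrite -natrD; congr (_ %:R); lia.
rewrite en !natrD !natrM normCK.
by field; rewrite /= ?conjC_eq0 b0 (addrC 1 h%:R) (addrC 1 g%:R) !natr1 !pnatr_eq0.
Qed.

Lemma moment_pair_odd m n k : odd m -> (0 < k)%N -> (k.*2 < n)%N ->
  moment_pair m n (n - 2 * k)%N = (`|a| ^+ 2) ^+ n.-1 *
  \sum_(1 <= g < k.+1) \sum_(1 <= h < k.+1)
    Ccoef a b n k g h * ((n - 2 * k)%:R ^+ m.+1 / (g * h)%:R) *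
    (- (n%:R * (`|a| ^+ 2 - `|b| ^+ 2) + (g + h)%:R) * (`|al| ^+ 2 - `|be| ^+ 2)
     + ((g + h)%:R / `|b| ^+ 2 - 2 * n%:R) * Rephi a b al be).
Proof.
move=> hmo hk hkn; rewrite moment_pairE hmo mulN1r prob_pair_sub //.
rewrite big_add1 /= big_mkord.
under [in RHS]eq_bigr do rewrite big_add1 /= big_mkord.
rewrite mulrCA; congr (_ * _); rewrite mulr_sumr; apply: eq_bigr => g _.
rewrite mulr_sumr; apply: eq_bigr => h _; rewrite CcoefE.
have en : n%:R = k%:R + (n - k)%:R :> C by rewrite -natrD; congr (_ %:R); lia.
have ex : (n - 2 * k)%:R = (n - k)%:R - k%:R :> C.
  by rewrite -natrB; [congr (_ %:R); lia | lia].
rewrite ex en /Rephi !rmorphM /= !natrD !natrM !normCK exprS.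
by field; rewrite /= ?conjC_eq0 b0 (addrC 1 h%:R) (addrC 1 g%:R) !natr1 !pnatr_eq0.
Qed.

Lemma moment_window_even m n N : ~~ odd m -> (0 < m)%N -> (0 < n)%N -> (n <= N)%N ->
  `|al| ^+ 2 + `|be| ^+ 2 = 1 ->
  moment_window U phi n m N = even_moment a b n m.
Proof.
move=> hmo hm hn hnN hnorm; rewrite moment_window_pairs // /even_moment /=.
rewrite big_add1 /= big_mkord big_ord_recl muln0 subn0 mulrDr mulr_sumr.
congr (_ + _).
  case: n hn {hnN} => // n _.
  by rewrite moment_pairE (negbTE hmo) mul1r prob_extremes_add // mulrC.
apply: eq_bigr => i _; rewrite lift0 moment_pair_even //.
by move: (ltn_ord i); rewrite gtn_half_double -!muln2; lia.
Qed.

Lemma moment_window_odd m n N : odd m -> (0 < m)%N -> (0 < n)%N -> (n <= N)%N ->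
  moment_window U phi n m N = odd_moment a b al be n m.
Proof.
move=> hmo hm hn hnN; rewrite moment_window_pairs // /odd_moment /=.
rewrite big_add1 /= big_mkord big_ord_recl muln0 subn0 mulrDr mulr_sumr.
congr (_ + _).
  case: n hn {hnN} => // n _.
  rewrite moment_pairE hmo mulN1r prob_extremes_sub /Rephi !rmorphM /= !normCK; ring.
apply: eq_bigr => i _; rewrite lift0 moment_pair_odd //.
by move: (ltn_ord i); rewrite gtn_half_double -!muln2; lia.
Qed.
End Walk.

Unset Implicit Arguments.

Theorem proposition2 (R : rcfType) (U : 'M[R[i]]_2) (alpha beta : R[i]) (n m : nat) :
  unitary U ->
  U 0 0 * U 0 1 * U 1 0 * U 1 1 != 0 ->
  `|alpha| ^+ 2 + `|beta| ^+ 2 = 1 ->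
  (1 <= n)%N -> (1 <= m)%N ->
  [/\ (odd m -> forall N : nat, (n <= N)%N ->
         moment_window U (qubit alpha beta) n m N
         = odd_moment (U 0 0) (U 0 1) alpha beta n m),
      (~~ odd m -> forall N : nat, (n <= N)%N ->
         moment_window U (qubit alpha beta) n m N = even_moment (U 0 0) (U 0 1) n m)
    & (~~ odd m -> forall (alpha' beta' : R[i]) (N : nat), (n <= N)%N ->
         `|alpha'| ^+ 2 + `|beta'| ^+ 2 = 1 ->
         moment_window U (qubit alpha' beta') n m N
         = moment_window U (qubit alpha beta) n m N)].
Proof.
move=> hU habcd hnorm hn hm.
have [a0 b0 c0 d0] : [/\ U 0 0 != 0, U 0 1 != 0, U 1 0 != 0 & U 1 1 != 0].
  by move: habcd; rewrite !mulf_eq0 !negb_or => /andP[/andP[/andP[-> ->] ->] ->].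
split=> [hmo N hN | hmo N hN | hmo alpha' beta' N hN hnorm'].
- exact: moment_window_odd.
- exact: moment_window_even.
- by rewrite !moment_window_even.
Qed.
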